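(* Let $(\psi,p,A)$ be a regular normal extremal containing an interior three-bang block $Y(\ell_1)\,X(\tau_X)\,Y(\ell_2)$, i.e. three consecutive arcs, a $Y$-arc of length $\ell_1\in(0,2\pi)$, an $X$-arc of length $\tau_X=\pi/\sin\gamma$, and a $Y$-arc of length $\ell_2\in(0,2\pi)$, whose initial and final times are both switching times. If the reduced data at the initial time of the block are $(0,a,b)$ with $a\neq0$, then the reduced data at its final time are $(0,-a,b)$, i.e. the same as those produced by a single switching-to-switching $X$-arc of length $\tau_X$ started from $(0,a,b)$, while the block has total length $\ell_1+\tau_X+\ell_2>\tau_X$. Consequently, such an interior $YXY$ block cannot occur on a regular normal time-optimal extremal.
   Context: Fix $\gamma\in(0,\pi/2)$, $s=\sin\gamma$, $c=\cos\gamma$, and $X=\begin{pmatrix}0&s^2&sc\\-s^2&0&0\\-sc&0&0\end{pmatrix}$, $Y=\begin{pmatrix}0&1&0\\-1&0&0\\0&0&0\end{pmatrix}$ on $\mathbb R^3$ with standard basis $e_1,e_2,e_3$ and standard inner product. Let $\Sigma=\{\psi:\langle e_3,\psi\rangle=0\}$, $\psi_0=(0,s,c)^\top$. Time-optimal problem: over piecewise constant controls $A:[0,T]\to\{X,Y\}$ with finitely many discontinuities (switching times) and trajectories $\dot\psi=A(t)\psi$, $\psi(0)=\psi_0$, minimize $T$ subject to $\psi(T)\in\Sigma$. Maximal intervals on which $A\equiv X$ (resp. $Y$) are $X$-arcs (resp. $Y$-arcs), also called bangs. A normal extremal is such a trajectory with a nonzero absolutely continuous costate $p$ satisfying $\dot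 p=-A(t)^\top p$ and, for a.e. $t$, $\langle p,A(t)\psi\rangle-1=\max_{B\in\{X,Y\}}(\langle p,B\psi\rangle-1)$. Let $F_1=X-Y$, $F_2=[X,Y]$, $F_3=[Y,[X,Y]]$, and reduced data $(\phi_1,\phi_2,\phi_3)$ with $\phi_i=\langle p,F_i\psi\rangle$; the switching function is $\Phi=\phi_1$. A normal extremal is regular (bang–bang) if $\Phi$ vanishes only at isolated times and at every switching time $\phi_1=0$ and $\phi_2\neq 0$. Time-optimal means the trajectory solves the minimization problem. *)

From Stdlib Require Import Reals Lra List Sorted.
Open Scope R_scope.

(* Vectors of R^3 and 3x3 matrices, indexed by 0,1,2 (values at other
   indices are irrelevant and never used). *)
Definition vec := nat -> R.
Definition mat := nat -> nat -> R.

Definition dot (u v : vec) : R :=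
  u 0%nat * v 0%nat + u 1%nat * v 1%nat + u 2%nat * v 2%nat.
Definition mv (M : mat) (v : vec) : vec := fun i =>
  M i 0%nat * v 0%nat + M i 1%nat * v 1%nat + M i 2%nat * v 2%nat.
Definition mm (M N : mat) : mat := fun i j =>
  M i 0%nat * N 0%nat j + M i 1%nat * N 1%nat j + M i 2%nat * N 2%nat j.
Definition msub (M N : mat) : mat := fun i j => M i j - N i j.
Definition mopp (M : mat) : mat := fun i j => - M i j.
Definition mtr (M : mat) : mat := fun i j => M j i.
Definition bracket (M N : mat) : mat := msub (mm M N) (mm N M).

Definition mk3 (a00 a01 a02 a10 a11 a12 a20 a21 a22 : R) : mat := fun i j =>
  match i, j with
  | 0%nat, 0%nat => a00 | 0%nat, 1%nat => a01 | 0%nat, 2%nat => a02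
  | 1%nat, 0%nat => a10 | 1%nat, 1%nat => a11 | 1%nat, 2%nat => a12
  | 2%nat, 0%nat => a20 | 2%nat, 1%nat => a21 | 2%nat, 2%nat => a22
  | _, _ => 0%R
  end.
Definition mkv (x y z : R) : vec := fun i =>
  match i with 0%nat => x | 1%nat => y | 2%nat => z | _ => 0%R end.

Definition veq (u v : vec) : Prop := forall i, (i < 3)%nat -> u i = v i.

Definition Xm (g : R) : mat :=
  mk3 0 (sin g ^ 2) (sin g * cos g)
      (- sin g ^ 2) 0 0
      (- (sin g * cos g)) 0 0.
Definition Ym : mat := mk3 0 1 0 (-1) 0 0 0 0 0.
Definition e3 : vec := mkv 0 0 1.
Definition psi0 (g : R) : vec := mkv 0 (sin g) (cos g).
Definition inSigma (v : vec) : Prop := dot e3 v = 0.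

Inductive ctrl := CX | CY.
Definition cmat (g : R) (C : ctrl) : mat :=
  match C with CX => Xm g | CY => Ym end.

Definition F1 (g : R) : mat := msub (Xm g) Ym.
Definition F2 (g : R) : mat := bracket (Xm g) Ym.
Definition F3 (g : R) : mat := bracket Ym (bracket (Xm g) Ym).

Definition phi1 g (psi p : R -> vec) t := dot (p t) (mv (F1 g) (psi t)).
Definition phi2 g (psi p : R -> vec) t := dot (p t) (mv (F2 g) (psi t)).
Definition phi3 g (psi p : R -> vec) t := dot (p t) (mv (F3 g) (psi t)).

Definition has_vderiv (f : R -> vec) (t : R) (d : vec) : Prop :=
  forall i, (i < 3)%nat -> derivable_pt_lim (fun u => f u i) t (d i).
Definition cont_on (T : R) (f : R -> vec) : Prop :=
  forall i, (i < 3)%nat -> forall t, 0 <= t <= T -> forall eps, eps > 0 ->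
    exists delta, delta > 0 /\ forall u, 0 <= u <= T -> Rabs (u - t) < delta ->
      Rabs (f u i - f t i) < eps.

(* Piecewise constant controls with finitely many switching times sw:
   sw is strictly increasing in (0,T), A is constant on each open interval
   between consecutive points of 0 :: sw ++ [T], and takes different values
   on consecutive intervals (so every point of sw is a genuine switch). *)
Definition pts (T : R) (sw : list R) : list R := 0 :: sw ++ T :: nil.
Definition ival (l : list R) (k : nat) (u : R) : Prop :=
  nth k l 0 < u < nth (S k) l 0.
Definition pw_const (T : R) (A : R -> ctrl) (sw : list R) : Prop :=
  Sorted Rlt sw /\ (forall t, In t sw -> 0 < t < T) /\
  (forall k, (S k < length (pts T sw))%nat -> forall u v,
      ival (pts T sw) k u -> ival (pts T sw) k v -> A u = A v) /\
  (forall k, (S (S k) < length (pts T sw))%nat -> forall u v,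
      ival (pts T sw) k u -> ival (pts T sw) (S k) v -> A u <> A v).

Definition traj (g T : R) (A : R -> ctrl) (psi : R -> vec) : Prop :=
  cont_on T psi /\ veq (psi 0) (psi0 g) /\
  exists E : list R, forall t, 0 < t < T -> ~ In t E ->
    has_vderiv psi t (mv (cmat g (A t)) (psi t)).

Definition admissible (g T : R) (A : R -> ctrl) (psi : R -> vec) : Prop :=
  0 <= T /\ (exists sw, pw_const T A sw) /\ traj g T A psi /\ inSigma (psi T).

Definition time_optimal (g T : R) (A : R -> ctrl) (psi : R -> vec) : Prop :=
  admissible g T A psi /\
  forall T' A' psi', admissible g T' A' psi' -> T <= T'.

Definition normal_extremal (g T : R) (A : R -> ctrl) (sw : list R)
    (psi p : R -> vec) : Prop :=
  0 < T /\ pw_const T A sw /\ traj g T A psi /\ inSigma (psi T) /\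
  cont_on T p /\
  (exists t, 0 <= t <= T /\ exists i, (i < 3)%nat /\ p t i <> 0) /\
  (exists E : list R, forall t, 0 < t < T -> ~ In t E ->
     has_vderiv p t (mv (mopp (mtr (cmat g (A t)))) (p t))) /\
  (exists E : list R, forall t, 0 < t < T -> ~ In t E -> forall B : ctrl,
     dot (p t) (mv (cmat g (A t)) (psi t)) - 1 >=
     dot (p t) (mv (cmat g B) (psi t)) - 1).

Definition regular (g T : R) (sw : list R) (psi p : R -> vec) : Prop :=
  (forall t, 0 <= t <= T -> phi1 g psi p t = 0 ->
     exists eps, eps > 0 /\ forall u, 0 <= u <= T -> 0 < Rabs (u - t) < eps ->
       phi1 g psi p u <> 0) /\
  (forall t, In t sw -> phi1 g psi p t = 0 /\ phi2 g psi p t <> 0).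

From Stdlib Require Import Reals Lra Lia List.
From Coquelicot Require Import Coquelicot.
Open Scope R_scope.

(* Along an arc with constant control C, each reduced datum <p, M psi> has
   derivative <p, [M, C] psi>.  On a Y-arc this makes (phi2, phi3) rotate at
   unit speed while phi3 - phi1 is conserved; on an X-arc (phi2, sin g * phi1)
   rotates at speed sin g while phi3 - sin g ^ 2 * phi1 is conserved.  Hence an
   X-arc of length PI / sin g maps (0, -a, b) to (0, a, b), and a Y-arc of
   length in (0, 2 PI) joining two zeros of phi1 maps (0, a, b) to (0, -a, b),
   because the only rotation other than the identity that fixes the second
   coordinate of (a, b) negates the first.  The block is thus longer than an
   X-arc with the same effect, and the trajectory cannot be optimal: a single
   X-arc already reaches Sigma at time PI / (2 sin g). *)

Lemma cos_neq_1 x : 0 < x < 2 * PI -> cos x <> 1.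
Proof.
  intros Hx Hc.
  assert (sin (x / 2) > 0) by (apply sin_gt_0; lra).
  replace x with (2 * (x / 2)) in Hc by field.
  rewrite cos_2a_sin in Hc. nra.
Qed.

Lemma rotation_fixing_second_coord a b l :
  a <> 0 -> 0 < l < 2 * PI -> a * sin l + b * cos l = b ->
  a * cos l - b * sin l = - a.
Proof.
  intros Ha Hl Hb.
  pose proof (sin2_cos2 l) as Hsc. unfold Rsqr in Hsc.
  set (q := a * cos l - b * sin l).
  (* rotations preserve the norm, so q = a or q = - a *)
  assert (Hq : (q - a) * (q + a) = 0).
  { replace ((q - a) * (q + a)) with
      ((a * a + b * b) * (sin l * sin l + cos l * cos l - 1)
       - (a * sin l + b * cos l - b) * (a * sin l + b * cos l + b)) by (unfold q; ring).
    rewrite Hsc, Hb. ring. }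
  destruct (Rmult_integral _ _ Hq) as [Hqa|]; [|lra].
  exfalso. apply (cos_neq_1 l Hl).
  assert (H2 : a * (2 - 2 * cos l) = 0).
  { replace (a * (2 - 2 * cos l)) with
      ((a - q) * (1 - cos l) + (a * sin l + b * cos l - b) * sin l
       - a * (sin l * sin l + cos l * cos l - 1)) by (unfold q; ring).
    rewrite Hsc, Hb. replace (a - q) with 0 by lra. ring. }
  destruct (Rmult_integral _ _ H2); lra.
Qed.

Lemma derivable_pt_lim_value f x l l' :
  derivable_pt_lim f x l -> l = l' -> derivable_pt_lim f x l'.
Proof. now intros ? <-. Qed.

Lemma null_derivative_off_finite (f : R -> R) (E : list R) a b : a <= b ->
  (forall x, a <= x <= b -> continuity_pt f x) ->
  (forall x, a < x < b -> ~ In x E -> derivable_pt_lim f x 0) -> f a = f b.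
Proof.
  revert a b. induction E as [|e E IH]; intros a b Hab Hc Hd.
  - destruct (MVT_gen f a b (fun _ => 0)) as [c [_ Hfc]]; [| |lra].
    + intros x Hx. rewrite Rmin_left, Rmax_right in Hx by lra.
      apply is_derive_Reals, Hd; [lra|tauto].
    + intros x Hx. rewrite Rmin_left, Rmax_right in Hx by lra. apply Hc; lra.
  - assert (Hsplit : forall a' b', a <= a' -> a' <= b' -> b' <= b ->
              (forall x, a' < x < b' -> x <> e) -> f a' = f b').
    { intros a' b' H1 H2 H3 He. apply IH; [lra| intros; apply Hc; lra |].
      intros x Hx Hn. apply Hd; [lra|]. intros [->|]; [apply (He x)|]; auto. }
    destruct (Rlt_dec a e) as [H1|H1]; [destruct (Rlt_dec e b) as [H2|H2]|].
    + transitivity (f e); apply Hsplit; intros; lra.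
    + apply Hsplit; intros; lra.
    + apply Hsplit; intros; lra.
Qed.

(* The invariants are the coordinates of (x, y) in a frame rotating with it. *)
Lemma harmonic_rotation (x y : R -> R) (w t0 t1 : R) (E : list R) : t0 <= t1 ->
  (forall u, t0 <= u <= t1 -> continuity_pt x u /\ continuity_pt y u) ->
  (forall u, t0 < u < t1 -> ~ In u E ->
     derivable_pt_lim x u (- w * y u) /\ derivable_pt_lim y u (w * x u)) ->
  x t1 = x t0 * cos (w * (t1 - t0)) - y t0 * sin (w * (t1 - t0)) /\
  y t1 = x t0 * sin (w * (t1 - t0)) + y t0 * cos (w * (t1 - t0)).
Proof.
  intros Ht Hc Hd.
  set (I1 := fun u => x u * cos (w * (u - t0)) + y u * sin (w * (u - t0))).
  set (I2 := fun u => - x u * sin (w * (u - t0)) + y u * cos (w * (u - t0))).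
  assert (Hinv : I1 t0 = I1 t1 /\ I2 t0 = I2 t1).
  { split; apply (null_derivative_off_finite _ E); auto; unfold I1, I2;
      intros u Hu; [| intros Hn | | intros Hn].
    all: try (destruct (Hc u Hu); reg; auto).
    all: destruct (Hd u Hu Hn) as [Dx Dy].
    all: apply is_derive_Reals in Dx, Dy.
    all: apply is_derive_Reals; auto_derive;
      [repeat split; eexists; eassumption|].
    all: replace (Derive (fun v => x v) u) with (- w * y u)
           by (symmetry; now apply is_derive_unique).
    all: replace (Derive (fun v => y v) u) with (w * x u)
           by (symmetry; now apply is_derive_unique).
    all: ring. }
  unfold I1, I2 in Hinv.
  rewrite Rminus_diag, Rmult_0_r, cos_0, sin_0 in Hinv.
  set (c := cos (w * (t1 - t0))) in *. set (s := sin (w * (t1 - t0))) in *.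
  pose proof (sin2_cos2 (w * (t1 - t0))) as Hsc. unfold Rsqr in Hsc. fold c s in Hsc.
  destruct Hinv as [Hx Hy].
  split.
  - transitivity (x t1 * (s * s + c * c)); [rewrite Hsc; ring| nra].
  - transitivity (y t1 * (s * s + c * c)); [rewrite Hsc; ring| nra].
Qed.

Lemma derivable_pt_lim_pairing (psi p : R -> vec) t M C :
  has_vderiv psi t (mv C (psi t)) -> has_vderiv p t (mv (mopp (mtr C)) (p t)) ->
  derivable_pt_lim (fun u => dot (p u) (mv M (psi u))) t
    (dot (p t) (mv (bracket M C) (psi t))).
Proof.
  intros Dpsi Dp. unfold dot, mv.
  eapply derivable_pt_lim_value.
  - repeat first [ apply derivable_pt_lim_plus | apply derivable_pt_lim_mult
                 | apply derivable_pt_lim_const | apply Dpsi; lia | apply Dp; lia ].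
  - unfold bracket, msub, mm, mopp, mtr, mv. ring.
Qed.

Lemma continuity_pt_pairing (psi p : R -> vec) t M :
  (forall i, (i < 3)%nat -> continuity_pt (fun u => psi u i) t) ->
  (forall i, (i < 3)%nat -> continuity_pt (fun u => p u i) t) ->
  continuity_pt (fun u => dot (p u) (mv M (psi u))) t.
Proof.
  intros Cpsi Cp. unfold dot, mv.
  repeat first [ apply continuity_pt_plus | apply continuity_pt_mult
               | apply continuity_pt_const; intros ? ?; reflexivity
               | apply Cpsi; lia | apply Cp; lia ].
Qed.

Lemma cont_on_continuity_pt T (f : R -> vec) t i :
  cont_on T f -> 0 < t < T -> (i < 3)%nat -> continuity_pt (fun u => f u i) t.
Proof.
  intros Hf Ht Hi eps Heps.
  destruct (Hf i Hi t ltac:(lra) eps Heps) as [d [Hd Hclose]].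
  exists (Rmin d (Rmin t (T - t))). split.
  - repeat apply Rmin_pos; lra.
  - intros u [_ Hu]. simpl in *. unfold R_dist in *.
    pose proof (Rmin_l d (Rmin t (T - t))). pose proof (Rmin_r d (Rmin t (T - t))).
    pose proof (Rmin_l t (T - t)). pose proof (Rmin_r t (T - t)).
    apply Rabs_def2 in Hu as Hu'. apply Hclose; lra.
Qed.

Ltac unfold_reduced :=
  unfold phi1, phi2, phi3, F1, F2, F3, Xm, Ym, bracket, msub, mm, mv, dot, mk3.

Lemma bracket_F1_Y g (psi p : R -> vec) u :
  dot (p u) (mv (bracket (F1 g) Ym) (psi u)) = phi2 g psi p u.
Proof. unfold_reduced. ring. Qed.

Lemma bracket_F2_Y g (psi p : R -> vec) u :
  dot (p u) (mv (bracket (F2 g) Ym) (psi u)) = - phi3 g psi p u.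
Proof. unfold_reduced. ring. Qed.

Lemma bracket_F3_Y g (psi p : R -> vec) u :
  dot (p u) (mv (bracket (F3 g) Ym) (psi u)) = phi2 g psi p u.
Proof. unfold_reduced. ring. Qed.

Lemma bracket_F1_X g (psi p : R -> vec) u :
  dot (p u) (mv (bracket (F1 g) (Xm g)) (psi u)) = phi2 g psi p u.
Proof. unfold_reduced. ring. Qed.

Lemma bracket_F2_X g (psi p : R -> vec) u :
  dot (p u) (mv (bracket (F2 g) (Xm g)) (psi u)) = - sin g ^ 2 * phi1 g psi p u.
Proof.
  pose proof (sin2_cos2 g) as Hsc. unfold Rsqr in Hsc.
  transitivity (- sin g ^ 2 * phi1 g psi p u + sin g ^ 2 *
    (1 - (sin g * sin g + cos g * cos g)) * (psi u 0%nat * p u 1%nat - psi u 1%nat * p u 0%nat)).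
  - unfold_reduced. ring.
  - rewrite Hsc. ring.
Qed.

Lemma bracket_F3_X g (psi p : R -> vec) u :
  dot (p u) (mv (bracket (F3 g) (Xm g)) (psi u)) = sin g ^ 2 * phi2 g psi p u.
Proof. unfold_reduced. ring. Qed.

Section Arcs.
Variables (g T : R) (A : R -> ctrl) (psi p : R -> vec) (E1 E2 : list R).
Hypothesis psi_cont : cont_on T psi.
Hypothesis p_cont : cont_on T p.
Hypothesis psi_ode : forall t, 0 < t < T -> ~ In t E1 ->
  has_vderiv psi t (mv (cmat g (A t)) (psi t)).
Hypothesis p_ode : forall t, 0 < t < T -> ~ In t E2 ->
  has_vderiv p t (mv (mopp (mtr (cmat g (A t)))) (p t)).

Lemma continuity_pt_reduced M t : 0 < t < T ->
  continuity_pt (fun u => dot (p u) (mv M (psi u))) t.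
Proof.
  intros Ht. apply continuity_pt_pairing; intros i Hi;
    apply (cont_on_continuity_pt T); auto.
Qed.

Lemma derivable_pt_lim_reduced_arc C M t0 t1 u : 0 < t0 -> t1 < T ->
  (forall v, t0 < v < t1 -> A v = C) -> t0 < u < t1 -> ~ In u (E1 ++ E2) ->
  derivable_pt_lim (fun v => dot (p v) (mv M (psi v))) u
    (dot (p u) (mv (bracket M (cmat g C)) (psi u))).
Proof.
  intros Ht0 Ht1 HA Hu Hn. rewrite in_app_iff in Hn.
  rewrite <- (HA u Hu).
  apply derivable_pt_lim_pairing; [apply psi_ode | apply p_ode]; tauto || lra.
Qed.

Lemma Y_arc_switch t0 t1 a b :
  0 < t0 -> t1 < T -> 0 < t1 - t0 < 2 * PI ->
  (forall u, t0 < u < t1 -> A u = CY) ->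
  phi1 g psi p t0 = 0 -> phi2 g psi p t0 = a -> phi3 g psi p t0 = b -> a <> 0 ->
  phi1 g psi p t1 = 0 -> phi2 g psi p t1 = - a /\ phi3 g psi p t1 = b.
Proof.
  intros Ht0 Ht1 Hl HA P1 P2 P3 Ha Q1.
  assert (D : forall M u, t0 < u < t1 -> ~ In u (E1 ++ E2) ->
            derivable_pt_lim (fun v => dot (p v) (mv M (psi v))) u
              (dot (p u) (mv (bracket M Ym) (psi u))))
    by (intros; apply (derivable_pt_lim_reduced_arc CY M t0 t1); auto).
  assert (Hrot : forall u, t0 < u < t1 -> ~ In u (E1 ++ E2) ->
            derivable_pt_lim (phi2 g psi p) u (- 1 * phi3 g psi p u) /\
            derivable_pt_lim (phi3 g psi p) u (1 * phi2 g psi p u)).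
  { intros u Hu Hn; split; eapply derivable_pt_lim_value; try apply D; auto.
    - rewrite bracket_F2_Y. ring.
    - rewrite bracket_F3_Y. ring. }
  assert (Hcont : forall u, t0 <= u <= t1 ->
            continuity_pt (phi2 g psi p) u /\ continuity_pt (phi3 g psi p) u)
    by (intros u Hu; split; apply continuity_pt_reduced; lra).
  destruct (harmonic_rotation (phi2 g psi p) (phi3 g psi p) 1 t0 t1 (E1 ++ E2)
              ltac:(lra) Hcont Hrot) as [R2 R3].
  assert (Hcons : phi3 g psi p t0 - phi1 g psi p t0 = phi3 g psi p t1 - phi1 g psi p t1).
  { apply (null_derivative_off_finite (fun u => phi3 g psi p u - phi1 g psi p u) (E1 ++ E2));
      [lra| |].
    - intros u Hu. apply continuity_pt_minus; apply continuity_pt_reduced; lra.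
    - intros u Hu Hn. eapply derivable_pt_lim_value.
      + apply derivable_pt_lim_minus; apply D; auto.
      + rewrite bracket_F3_Y, bracket_F1_Y. ring. }
  rewrite Rmult_1_l, P2, P3 in *. rewrite P1, Q1 in Hcons.
  split; [rewrite R2 | lra].
  apply rotation_fixing_second_coord; auto. lra.
Qed.

Lemma X_arc_switch t1 t2 a b :
  0 < t1 -> t2 < T -> 0 < sin g -> t2 - t1 = PI / sin g ->
  (forall u, t1 < u < t2 -> A u = CX) ->
  phi1 g psi p t1 = 0 -> phi2 g psi p t1 = - a -> phi3 g psi p t1 = b ->
  phi1 g psi p t2 = 0 -> phi2 g psi p t2 = a /\ phi3 g psi p t2 = b.
Proof.
  intros Ht1 Ht2 Hs Hl HA P1 P2 P3 Q1.
  assert (0 < PI / sin g) by (apply Rdiv_lt_0_compat; [apply PI_RGT_0 | exact Hs]).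
  assert (Hle : t1 <= t2) by lra.
  assert (D : forall M u, t1 < u < t2 -> ~ In u (E1 ++ E2) ->
            derivable_pt_lim (fun v => dot (p v) (mv M (psi v))) u
              (dot (p u) (mv (bracket M (Xm g)) (psi u))))
    by (intros; apply (derivable_pt_lim_reduced_arc CX M t1 t2); auto).
  assert (Hrot : forall u, t1 < u < t2 -> ~ In u (E1 ++ E2) ->
            derivable_pt_lim (phi2 g psi p) u (- sin g * (sin g * phi1 g psi p u)) /\
            derivable_pt_lim (fun v => sin g * phi1 g psi p v) u (sin g * phi2 g psi p u)).
  { intros u Hu Hn; split; eapply derivable_pt_lim_value.
    - apply D; auto.
    - rewrite bracket_F2_X. ring.
    - apply derivable_pt_lim_scal, D; auto.
    - rewrite bracket_F1_X. ring. }
  assert (Hcont : forall u, t1 <= u <= t2 -> continuity_pt (phi2 g psi p) u /\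
            continuity_pt (fun v => sin g * phi1 g psi p v) u).
  { intros u Hu; split; [|apply continuity_pt_scal]; apply continuity_pt_reduced; lra. }
  destruct (harmonic_rotation _ _ _ _ _ _ Hle Hcont Hrot) as [R2 _].
  assert (Hcons : phi3 g psi p t1 - sin g ^ 2 * phi1 g psi p t1
              = phi3 g psi p t2 - sin g ^ 2 * phi1 g psi p t2).
  { apply (null_derivative_off_finite
             (fun u => phi3 g psi p u - sin g ^ 2 * phi1 g psi p u) (E1 ++ E2)); [lra| |].
    - intros u Hu. apply continuity_pt_minus; [|apply continuity_pt_scal];
        apply continuity_pt_reduced; lra.
    - intros u Hu Hn. eapply derivable_pt_lim_value.
      + apply derivable_pt_lim_minus; [|apply derivable_pt_lim_scal]; apply D; auto.
      + rewrite bracket_F3_X, bracket_F1_X. ring. }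
  replace (sin g * (t2 - t1)) with PI in R2 by (rewrite Hl; field; lra).
  rewrite cos_PI, sin_PI, P1, P2 in R2. rewrite P1, P3, Q1 in Hcons.
  split; lra.
Qed.

End Arcs.

Lemma cont_on_of_continuity_pt T (f : R -> vec) :
  (forall i, (i < 3)%nat -> forall t, continuity_pt (fun u => f u i) t) -> cont_on T f.
Proof.
  intros Hf i Hi t _ eps Heps.
  destruct (Hf i Hi t eps Heps) as [d [Hd Hclose]].
  exists d. split; auto. intros u _ Hu.
  destruct (Req_dec t u) as [<-|Hne].
  - rewrite Rminus_diag, Rabs_R0. lra.
  - apply (Hclose u). split; [split; [exact I|exact Hne]|]. exact Hu.
Qed.

(* The X-flow rotates psi0 = (0, s, c) in the plane spanned by e1 and
   (0, s, c), at speed sin g; it hits Sigma after a quarter turn. *)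
Definition X_flow (g : R) : R -> vec := fun u =>
  mkv (sin (sin g * u)) (sin g * cos (sin g * u)) (cos g * cos (sin g * u)).

Lemma admissible_X_flow g : 0 < sin g ->
  admissible g (PI / (2 * sin g)) (fun _ => CX) (X_flow g).
Proof.
  intros Hs.
  pose proof (sin2_cos2 g) as Hsc. unfold Rsqr in Hsc.
  split; [|split; [|split]].
  - left. apply Rdiv_lt_0_compat; [apply PI_RGT_0 | lra].
  - exists nil. split; [constructor|]. split; [intros t []|].
    split; [intros; reflexivity | intros k Hk; simpl in Hk; lia].
  - split; [|split].
    + apply cont_on_of_continuity_pt. intros i Hi t.
      destruct i as [|[|[|i]]]; [| | | lia]; unfold X_flow, mkv; reg.
    + intros i Hi. unfold X_flow, psi0, mkv.
      destruct i as [|[|[|i]]]; [| | | lia]; rewrite Rmult_0_r, ?sin_0, ?cos_0; ring.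
    + exists nil. intros t _ _ i Hi. unfold cmat, Xm, mv, mk3, X_flow, mkv.
      destruct i as [|[|[|i]]]; [| | | lia]; apply is_derive_Reals; auto_derive; auto.
      * transitivity (sin g * cos (sin g * t) * (sin g * sin g + cos g * cos g));
          [rewrite Hsc|]; ring.
      * ring.
      * ring.
  - unfold inSigma, dot, e3, X_flow, mkv.
    replace (sin g * (PI / (2 * sin g))) with (PI / 2) by (field; lra).
    rewrite cos_PI2. ring.
Qed.

Theorem mainTheorem11 (g T : R) (A : R -> ctrl) (sw : list R)
  (psi p : R -> vec) (k : nat) (a b : R) :
  0 < g < PI / 2 ->
  normal_extremal g T A sw psi p ->
  regular g T sw psi p ->
  (k + 3 < length sw)%nat ->
  (forall u, nth k sw 0 < u < nth (k + 1) sw 0 -> A u = CY) ->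
  (forall u, nth (k + 1) sw 0 < u < nth (k + 2) sw 0 -> A u = CX) ->
  (forall u, nth (k + 2) sw 0 < u < nth (k + 3) sw 0 -> A u = CY) ->
  0 < nth (k + 1) sw 0 - nth k sw 0 < 2 * PI ->
  nth (k + 2) sw 0 - nth (k + 1) sw 0 = PI / sin g ->
  0 < nth (k + 3) sw 0 - nth (k + 2) sw 0 < 2 * PI ->
  phi1 g psi p (nth k sw 0) = 0 ->
  phi2 g psi p (nth k sw 0) = a ->
  phi3 g psi p (nth k sw 0) = b ->
  a <> 0 ->
  (phi1 g psi p (nth (k + 3) sw 0) = 0 /\
   phi2 g psi p (nth (k + 3) sw 0) = - a /\
   phi3 g psi p (nth (k + 3) sw 0) = b) /\
  nth (k + 3) sw 0 - nth k sw 0 > PI / sin g /\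
  ~ time_optimal g T A psi.
Proof.
  intros Hg [_ [[_ [Hsw_in _]] [[Hcpsi [_ [E1 Hdpsi]]] [_ [Hcp [_ [[E2 Hdp] _]]]]]]]
    [_ Hswitch] Hlen HA1 HA2 HA3 Hl1 Hl2 Hl3 P1 P2 P3 Ha.
  assert (Hs : 0 < sin g) by (apply sin_gt_0; lra).
  assert (0 < PI / sin g) by (apply Rdiv_lt_0_compat; [apply PI_RGT_0 | lra]).
  set (t j := nth (k + j) sw 0).
  assert (Ht : forall j, (j <= 3)%nat -> 0 < t j < T /\ phi1 g psi p (t j) = 0).
  { intros j Hj. assert (Hin : In (t j) sw) by (apply nth_In; lia).
    split; [apply Hsw_in | apply Hswitch]; exact Hin. }
  replace (nth k sw 0) with (t 0%nat) in * by (unfold t; now rewrite Nat.add_0_r).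
  fold (t 1%nat) (t 2%nat) (t 3%nat) in *.
  destruct (Ht 0%nat) as [Ht0 _], (Ht 1%nat) as [_ Q1], (Ht 2%nat) as [_ Q2],
    (Ht 3%nat) as [Ht3 Q3]; try lia.
  destruct (Y_arc_switch g T A psi p E1 E2 Hcpsi Hcp Hdpsi Hdp (t 0%nat) (t 1%nat) a b)
    as [R2 R3]; auto; try lra.
  destruct (X_arc_switch g T A psi p E1 E2 Hcpsi Hcp Hdpsi Hdp (t 1%nat) (t 2%nat) a b)
    as [S2 S3]; auto; try lra.
  destruct (Y_arc_switch g T A psi p E1 E2 Hcpsi Hcp Hdpsi Hdp (t 2%nat) (t 3%nat) a b)
    as [U2 U3]; auto; try lra.
  split; [auto | split; [lra |]].
  intros [_ Hopt].
  specialize (Hopt _ _ _ (admissible_X_flow g Hs)).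
  assert (PI / (2 * sin g) < PI / sin g) by (unfold Rdiv; rewrite Rinv_mult;
    pose proof PI_RGT_0; pose proof (Rinv_0_lt_compat _ Hs); nra).
  lra.
Qed.
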